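(* Let $c_0>0$, let $\mu:[c_0,\infty)\to\mathbb{R}$ and $Q:[1,\infty)\to\mathbb{R}_{\ge 0}$ be twice differentiable, increasing and concave. For $B\ge c_0$ and $\omega\in[c_0,B]$ let $Z_B(\omega)=\mu(\omega)+Q(B/\omega)$, let $\Omega^*(B)=\arg\max_{\omega\in[c_0,B]} Z_B(\omega)$, and let $\underline{\omega}(B)=\min\Omega^*(B)$, $\overline{\omega}(B)=\max\Omega^*(B)$. (i) If $N\mapsto N\,Q'(N)$ is non-increasing on $[1,\infty)$, then both $\underline{\omega}(B)$ and $\overline{\omega}(B)$ are non-decreasing functions of $B\in[c_0,\infty)$. (ii) If in addition $N\mapsto N^2 Q'(N)$ is strictly decreasing on $[1,\infty)$, then for every $B\ge c_0$ the set $\Omega^*(B)$ is a singleton $\{\omega^\star(B)\}$, and $B\mapsto\omega^\star(B)$ is non-decreasing.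
   Context: Interpretation: $B$ is a total budget, $\omega$ a per-run budget, $\mu(\omega)$ the expected fitness of a single run with budget $\omega$, and $Q(N)$ the expected gain from taking the maximum over $N=B/\omega$ independent runs (continuous relaxation). $\Omega^*(B)$ is nonempty and compact since $Z_B$ is continuous on the compact interval $[c_0,B]$, so its minimum and maximum exist. *)

From Stdlib Require Import Reals Lra.
From Coquelicot Require Import Coquelicot.
Open Scope R_scope.

Definition is_derive_within (D : R -> Prop) (f : R -> R) (x l : R) : Prop :=
  filterlim (fun y => (f y - f x) / (y - x))
            (within (fun y => D y /\ y <> x) (locally x)) (locally l).

Definition twice_diff_on (D : R -> Prop) (f df d2f : R -> R) : Prop :=
  (forall x, D x -> is_derive_within D f x (df x)) /\
  (forall x, D x -> is_derive_within D df x (d2f x)).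

Definition increasing_on (D : R -> Prop) (f : R -> R) : Prop :=
  forall x y, D x -> D y -> x <= y -> f x <= f y.

Definition strictly_decreasing_on (D : R -> Prop) (f : R -> R) : Prop :=
  forall x y, D x -> D y -> x < y -> f y < f x.

Definition nonincreasing_on (D : R -> Prop) (f : R -> R) : Prop :=
  forall x y, D x -> D y -> x <= y -> f y <= f x.

Definition concave_on (D : R -> Prop) (f : R -> R) : Prop :=
  forall x y t, D x -> D y -> 0 <= t <= 1 ->
    t * f x + (1 - t) * f y <= f (t * x + (1 - t) * y).

Definition Z (mu Q : R -> R) (B w : R) : R := mu w + Q (B / w).

Definition argmax_set (c0 : R) (mu Q : R -> R) (B w : R) : Prop :=
  c0 <= w <= B /\ forall w', c0 <= w' <= B -> Z mu Q B w' <= Z mu Q B w.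

Definition is_min_argmax (c0 : R) (mu Q : R -> R) (B w : R) : Prop :=
  argmax_set c0 mu Q B w /\ forall w', argmax_set c0 mu Q B w' -> w <= w'.

Definition is_max_argmax (c0 : R) (mu Q : R -> R) (B w : R) : Prop :=
  argmax_set c0 mu Q B w /\ forall w', argmax_set c0 mu Q B w' -> w' <= w.

From Pilot Require Import Defs.
From Stdlib Require Import Reals Lra.
From Coquelicot Require Import Coquelicot.
Open Scope R_scope.

(* If N |-> N Q'(N) is nonincreasing then, for every
   r >= 1, N |-> Q (r N) - Q N is nonincreasing; since B / w' = (w / w') (B / w), this says
   that Z_B(w) - Z_B(w') is nondecreasing in B whenever w' <= w (increasing differences).
   Hence if w1 is optimal for B1 and w2 < w1 is optimal for B2 >= B1, then w2 is also optimal
   for B1 and w1 for B2, contradicting minimality of w1 or maximality of w2.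
   (ii) With N = B / w, the derivative of w |-> Q (B / w) is - N^2 Q'(N) / B, strictly
   decreasing in w; so this term is strictly concave and, mu being concave, Z_B has at most
   one maximiser, while one exists because Z_B is continuous on [c0, B].
   Only first derivatives enter. *)

Lemma continuous_on_plus (D : R -> Prop) (f g : R -> R) :
  continuous_on D f -> continuous_on D g -> continuous_on D (fun x => f x + g x).
Proof.
  intros Hf Hg x Dx.
  apply (filterlim_comp_2 _ _ Rplus (Hf x Dx) (Hg x Dx) (filterlim_plus (f x) (g x))).
Qed.

Lemma continuous_on_minus (D : R -> Prop) (f g : R -> R) :
  continuous_on D f -> continuous_on D g -> continuous_on D (fun x => f x - g x).
Proof.
  intros Hf Hg. apply (continuous_on_plus D f (fun x => - g x) Hf).
  intros x Dx. exact (filterlim_comp _ _ _ g Ropp _ _ _ (Hg x Dx) (filterlim_opp (g x))).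
Qed.

Lemma continuous_on_comp (D E : R -> Prop) (f g : R -> R) :
  (forall x, E x -> D (g x)) -> continuous_on E g -> continuous_on D f ->
  continuous_on E (fun x => f (g x)).
Proof.
  intros HED Hg Hf x Ex.
  eapply filterlim_comp; [| exact (Hf (g x) (HED x Ex))].
  intros P HP. unfold filtermap, within.
  apply (filter_imp (fun z => E z -> D (g z) -> P (g z))).
  - intros z Hz Ez. exact (Hz Ez (HED z Ez)).
  - exact (Hg x Ex _ HP).
Qed.

Lemma is_derive_within_continuous_on (D : R -> Prop) (f df : R -> R) :
  (forall x, D x -> is_derive_within D f x (df x)) -> continuous_on D f.
Proof.
  intros Hd x Dx.
  set (D' := fun y => D y /\ y <> x).
  assert (Hshift : filterlim (fun y => y - x) (within D' (locally x)) (locally 0)).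
  { apply (filterlim_filter_le_1 _ (filter_le_within (F := locally x) D')).
    replace 0 with (x - x) by ring.
    apply (continuous_minus (fun y => y) (fun _ => x)).
    - apply continuous_id.
    - apply continuous_const. }
  assert (Hlin : filterlim (fun y => f x + (f y - f x) / (y - x) * (y - x))
                   (within D' (locally x)) (locally (f x))).
  { replace (locally (f x)) with (locally (f x + df x * 0)) by (f_equal; ring).
    apply (filterlim_comp_2 _ _ Rplus (filterlim_const (f x))
             (filterlim_comp_2 _ _ Rmult (Hd x Dx) Hshift (filterlim_mult (df x) 0))
             (filterlim_plus (f x) (df x * 0))). }
  assert (Hf : filterlim f (within D' (locally x)) (locally (f x))).
  { refine (filterlim_within_ext _ _ _ _ Hlin).
    intros y [_ Hyx]. field. lra. }
  intros P HP. unfold filtermap, within.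
  apply (filter_imp (fun y => D' y -> P (f y))); [| exact (Hf P HP)].
  intros y Hy Dy. destruct (Req_dec y x) as [-> | Hyx].
  - exact (locally_singleton _ _ HP).
  - exact (Hy (conj Dy Hyx)).
Qed.

Lemma is_derive_within_interior (D : R -> Prop) (f : R -> R) (x l : R) :
  locally x D -> is_derive_within D f x l -> is_derive f x l.
Proof.
  intros HD Hd. apply is_derive_Reals. intros eps Heps.
  destruct (filter_and _ _ HD (Hd _ (locally_ball l (mkposreal eps Heps))))
    as [delta Hdelta].
  exists delta. intros h Hh0 Hh.
  assert (Hball : ball x delta (x + h)).
  { change (Rabs (x + h - x) < delta). now replace (x + h - x) with h by ring. }
  destruct (Hdelta _ Hball) as [Dxh Hq].
  assert (Hne : x + h <> x) by (intro E; apply Hh0; lra).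
  specialize (Hq (conj Dxh Hne)).
  change (Rabs ((f (x + h) - f x) / (x + h - x) - l) < eps) in Hq.
  now replace (x + h - x) with h in Hq by ring.
Qed.

Definition clamp (a b x : R) : R := Rmax a (Rmin b x).

Lemma clamp_in (a b x : R) : a <= b -> a <= clamp a b x <= b.
Proof. intros. unfold clamp, Rmax, Rmin. repeat destruct Rle_dec; lra. Qed.

Lemma clamp_id (a b x : R) : a <= x <= b -> clamp a b x = x.
Proof. intros. unfold clamp, Rmax, Rmin. repeat destruct Rle_dec; lra. Qed.

Lemma continuous_clamp (a b x : R) : continuous (clamp a b) x.
Proof.
  intros P [eps HP]. exists eps. intros y Hy. apply HP.
  change (Rabs (clamp a b y - clamp a b x) < eps). change (Rabs (y - x) < eps) in Hy.
  unfold clamp, Rmax, Rmin in *. unfold Rabs in *.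
  repeat destruct Rle_dec; repeat destruct Rcase_abs; lra.
Qed.

(* Extending [f] constantly outside [a, b] turns continuity on the closed interval
   into two-sided continuity, as required by [MVT_gen] and [continuity_ab_maj]. *)
Lemma continuous_on_clamp (f : R -> R) (a b : R) : a <= b ->
  continuous_on (fun x => a <= x <= b) f -> forall x, continuity_pt (fun y => f (clamp a b y)) x.
Proof.
  intros Hab Hf x. apply continuity_pt_filterlim.
  change (continuous (fun y => f (clamp a b y)) x).
  apply (continuous_continuous_on (fun _ => True)); [apply filter_true |].
  apply (continuous_on_comp (fun x => a <= x <= b)); [intros; now apply clamp_in | | exact Hf].
  apply continuous_on_forall. intros y _. apply continuous_clamp.
Qed.

Lemma continuous_on_attains_max (f : R -> R) (a b : R) : a <= b ->
  continuous_on (fun x => a <= x <= b) f ->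
  exists x, a <= x <= b /\ forall y, a <= y <= b -> f y <= f x.
Proof.
  intros Hab Hf.
  destruct (continuity_ab_maj _ a b Hab (fun c _ => continuous_on_clamp f a b Hab Hf c))
    as [x [Hmax Hx]].
  exists x. split; [exact Hx |]. intros y Hy.
  rewrite <- (clamp_id a b y Hy), <- (clamp_id a b x Hx). exact (Hmax y Hy).
Qed.

Lemma nondecreasing_of_derive (f df : R -> R) (a b : R) : a <= b ->
  continuous_on (fun x => a <= x <= b) f ->
  (forall x, a < x < b -> is_derive f x (df x) /\ 0 <= df x) -> f a <= f b.
Proof.
  intros Hab Hf Hd.
  (* [MVT_gen] may return an endpoint, where [df] has no sign; [Rmax 0 df] agrees with
     [df] inside. *)
  destruct (MVT_gen (fun y => f (clamp a b y)) a b (fun y => Rmax 0 (df y))) as [c [_ Hc]].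
  - rewrite Rmin_left, Rmax_right by lra. intros x Hx.
    destruct (Hd x Hx) as [Hdx Hpos]. rewrite Rmax_right by exact Hpos.
    apply (is_derive_ext_loc f); [| exact Hdx].
    apply (locally_interval _ x a b); [exact (proj1 Hx) | exact (proj2 Hx) |].
    intros y Hay Hyb. simpl in Hay, Hyb. rewrite clamp_id; lra.
  - rewrite Rmin_left, Rmax_right by lra. intros. now apply continuous_on_clamp.
  - rewrite !clamp_id in Hc by lra. pose proof (Rmax_l 0 (df c)). nra.
Qed.

Lemma increasing_of_derive (f df : R -> R) (a b : R) : a < b ->
  continuous_on (fun x => a <= x <= b) f ->
  (forall x, a < x < b -> is_derive f x (df x) /\ 0 < df x) -> f a < f b.
Proof.
  intros Hab Hf Hd.
  set (a' := (2 * a + b) / 3). set (b' := (a + 2 * b) / 3).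
  assert (Hleft : f a <= f a').
  { apply (nondecreasing_of_derive f df); [unfold a'; lra | |].
    - refine (continuous_on_subset _ _ f _ Hf). intros x Hx. unfold a' in Hx; lra.
    - intros x Hx. destruct (Hd x) as [? ?]; [unfold a' in Hx; lra | split; auto; lra]. }
  assert (Hright : f b' <= f b).
  { apply (nondecreasing_of_derive f df); [unfold b'; lra | |].
    - refine (continuous_on_subset _ _ f _ Hf). intros x Hx. unfold b' in Hx; lra.
    - intros x Hx. destruct (Hd x) as [? ?]; [unfold b' in Hx; lra | split; auto; lra]. }
  assert (Hmid : f a' < f b').
  { apply (incr_function f a b df); simpl; try (unfold a', b'; lra);
      intros x Hax Hxb; apply (Hd x); lra. }
  lra.
Qed.

Lemma continuous_on_of_ex_derive (D : R -> Prop) (g : R -> R) :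
  (forall x, D x -> ex_derive g x) -> continuous_on D g.
Proof.
  intros Hg. apply continuous_on_forall. intros x Dx. exact (ex_derive_continuous g x (Hg x Dx)).
Qed.

Lemma is_derive_of_within_Ici (c : R) (f df : R -> R) :
  (forall x, c <= x -> is_derive_within (fun y => c <= y) f x (df x)) ->
  forall x, c < x -> is_derive f x (df x).
Proof.
  intros Hd x Hx. apply (is_derive_within_interior (fun y => c <= y)); [| apply Hd; lra].
  apply (locally_interval _ x c p_infty); simpl; auto. intros; lra.
Qed.

Lemma one_le_div (B w : R) : 0 < w -> w <= B -> 1 <= B / w.
Proof. intros Hw HwB. apply (Rmult_le_reg_r w); [exact Hw |]. field_simplify; lra. Qed.

(* With [N = s] and [N = r s]: [(f (r s))' = r f'(r s) <= f' s] is [N f'(N)] nonincreasing. *)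
Lemma dilation_gap_nonincreasing (f df : R -> R) (r x v : R) :
  continuous_on (fun N => 1 <= N) f -> (forall N, 1 < N -> is_derive f N (df N)) ->
  nonincreasing_on (fun N => 1 <= N) (fun N => N * df N) ->
  1 <= r -> 1 <= x <= v -> f (r * v) - f v <= f (r * x) - f x.
Proof.
  intros Hf Hdf HN Hr Hxv.
  enough (f x - f (r * x) <= f v - f (r * v)) by lra.
  apply (nondecreasing_of_derive (fun s => f s - f (r * s))
           (fun s => df s - r * df (r * s))); [lra | |].
  - apply continuous_on_minus.
    + refine (continuous_on_subset _ _ f _ Hf). simpl; intros; lra.
    + apply (continuous_on_comp (fun N => 1 <= N)); [intros; nra | | exact Hf].
      apply continuous_on_of_ex_derive. intros. auto_derive. exact I.
  - intros s Hs. split.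
    + apply (is_derive_minus f (fun y => f (r * y))); [apply Hdf; lra |].
      apply (is_derive_comp f (fun y => r * y) s (df (r * s)) r); [apply Hdf; nra |].
      auto_derive; [exact I | ring].
    + pose proof (HN s (r * s) ltac:(simpl; lra) ltac:(simpl; nra) ltac:(nra)) as Hs'.
      simpl in Hs'. nra.
Qed.

Lemma is_derive_translate (h : R -> R) (c s l : R) :
  is_derive h (c + s) l -> is_derive (fun y => h (c + y)) s l.
Proof.
  intros Hh. rewrite <- (scal_one l).
  apply (is_derive_comp h (fun y => c + y)); [exact Hh |]. auto_derive; [exact I | reflexivity].
Qed.

Lemma midpoint_lt_of_derive_decreasing (h dh : R -> R) (a b : R) : a < b ->
  continuous_on (fun x => a <= x <= b) h ->
  (forall x, a < x < b -> is_derive h x (dh x)) ->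
  (forall x y, a < x -> x < y -> y < b -> dh y < dh x) ->
  h a + h b < 2 * h ((a + b) / 2).
Proof.
  intros Hab Hh Hdh Hdec.
  set (d := (b - a) / 2). set (m := (a + b) / 2).
  assert (Hshift : forall c, a <= c -> c + d <= b ->
            continuous_on (fun s => 0 <= s <= d) (fun s => h (c + s))).
  { intros c Hac Hcb. apply (continuous_on_comp (fun x => a <= x <= b)); [intros; lra | | exact Hh].
    apply continuous_on_of_ex_derive. intros. auto_derive. exact I. }
  assert (Hgap : h a - h m < h (a + d) - h (m + d)).
  { rewrite <- (Rplus_0_r a) at 1. rewrite <- (Rplus_0_r m) at 1.
    apply (increasing_of_derive (fun s => h (a + s) - h (m + s))
             (fun s => dh (a + s) - dh (m + s))); [unfold d; lra | |].
    - apply continuous_on_minus; apply Hshift; unfold m, d; lra.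
    - intros s Hs. split.
      + apply (is_derive_minus (fun y => h (a + y)) (fun y => h (m + y))).
        * apply is_derive_translate, Hdh. unfold d in Hs; lra.
        * apply is_derive_translate, Hdh. unfold m, d in Hs |- *; lra.
      + enough (dh (m + s) < dh (a + s)) by lra.
        apply Hdec; unfold m, d in Hs |- *; lra. }
  replace (a + d) with m in Hgap by (unfold m, d; field).
  replace (m + d) with b in Hgap by (unfold m, d; field).
  lra.
Qed.

Section Objective.

Variables (c0 : R) (mu Q dQ : R -> R).
Hypothesis c0_gt0 : 0 < c0.
Hypothesis mu_cont : continuous_on (fun w => c0 <= w) mu.
Hypothesis Q_cont : continuous_on (fun N => 1 <= N) Q.
Hypothesis Q_derive : forall N, 1 < N -> is_derive Q N (dQ N).

Lemma continuous_on_Q_div (B : R) :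
  continuous_on (fun w => c0 <= w <= B) (fun w => Q (B / w)).
Proof.
  apply (continuous_on_comp (fun N => 1 <= N)); [intros; apply one_le_div; lra | | exact Q_cont].
  apply continuous_on_of_ex_derive. intros w Hw. auto_derive. lra.
Qed.

Lemma argmax_set_exists (B : R) : c0 <= B -> exists w, argmax_set c0 mu Q B w.
Proof.
  intros HB. destruct (continuous_on_attains_max (Defs.Z mu Q B) c0 B HB) as [w [Hw Hmax]].
  - apply continuous_on_plus; [| apply continuous_on_Q_div].
    refine (continuous_on_subset _ _ mu _ mu_cont). simpl; intros; lra.
  - exists w. split; assumption.
Qed.

Lemma Q_div_midpoint_lt (B a b : R) :
  strictly_decreasing_on (fun N => 1 <= N) (fun N => N ^ 2 * dQ N) ->
  c0 <= a -> a < b -> b <= B ->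
  Q (B / a) + Q (B / b) < 2 * Q (B / ((a + b) / 2)).
Proof.
  intros HS Ha Hab HbB.
  apply (midpoint_lt_of_derive_decreasing (fun w => Q (B / w))
           (fun w => - B / w ^ 2 * dQ (B / w))); [exact Hab | | |].
  - refine (continuous_on_subset _ _ _ _ (continuous_on_Q_div B)). simpl; intros; lra.
  - intros w Hw. apply (is_derive_comp Q (fun w => B / w)).
    + apply Q_derive. apply (Rmult_lt_reg_r w); [lra |]. field_simplify; lra.
    + auto_derive; [lra | field; lra].
  - intros x y Hx Hxy Hy.
    assert (Hdiv : B / y < B / x).
    { apply Rmult_lt_compat_l; [lra |]. apply Rinv_lt_contravar; nra. }
    assert (Hlt : (B / x) ^ 2 * dQ (B / x) < (B / y) ^ 2 * dQ (B / y)).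
    { apply HS; [| | exact Hdiv]; simpl; apply one_le_div; lra. }
    (* In terms of [N = B / w], the derivative of [Q (B / w)] is [- N^2 Q'(N) / B]. *)
    replace (- B / y ^ 2 * dQ (B / y)) with (- ((B / y) ^ 2 * dQ (B / y)) / B) by (field; lra).
    replace (- B / x ^ 2 * dQ (B / x)) with (- ((B / x) ^ 2 * dQ (B / x)) / B) by (field; lra).
    apply Rmult_lt_compat_r; [apply Rinv_0_lt_compat; lra | lra].
Qed.

Lemma Z_midpoint_lt (B a b : R) :
  concave_on (fun w => c0 <= w) mu ->
  strictly_decreasing_on (fun N => 1 <= N) (fun N => N ^ 2 * dQ N) ->
  c0 <= a -> a < b -> b <= B ->
  Defs.Z mu Q B a + Defs.Z mu Q B b < 2 * Defs.Z mu Q B ((a + b) / 2).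
Proof.
  intros Hmu HS Ha Hab HbB.
  pose proof (Hmu a b (1 / 2) Ha ltac:(lra) ltac:(lra)) as Hmid.
  replace (1 / 2 * a + (1 - 1 / 2) * b) with ((a + b) / 2) in Hmid by field.
  pose proof (Q_div_midpoint_lt B a b HS Ha Hab HbB).
  unfold Defs.Z. lra.
Qed.

Lemma argmax_set_unique (B a b : R) :
  concave_on (fun w => c0 <= w) mu ->
  strictly_decreasing_on (fun N => 1 <= N) (fun N => N ^ 2 * dQ N) ->
  argmax_set c0 mu Q B a -> argmax_set c0 mu Q B b -> a = b.
Proof.
  intros Hmu HS.
  enough (Hlt : forall a b, argmax_set c0 mu Q B a -> argmax_set c0 mu Q B b -> ~ a < b).
  { intros Ha Hb. destruct (Rtotal_order a b) as [H | [H | H]]; [| exact H |].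
    - now destruct (Hlt a b Ha Hb).
    - now destruct (Hlt b a Hb Ha). }
  intros x y [Hx Hxmax] [Hy Hymax] Hxy.
  pose proof (Z_midpoint_lt B x y Hmu HS (proj1 Hx) Hxy (proj2 Hy)).
  pose proof (Hxmax ((x + y) / 2) ltac:(lra)).
  pose proof (Hymax ((x + y) / 2) ltac:(lra)).
  lra.
Qed.

Lemma Z_increasing_differences (B1 B2 w1 w2 : R) :
  nonincreasing_on (fun N => 1 <= N) (fun N => N * dQ N) ->
  B1 <= B2 -> c0 <= w2 <= w1 -> w1 <= B1 ->
  Defs.Z mu Q B1 w1 - Defs.Z mu Q B1 w2 <= Defs.Z mu Q B2 w1 - Defs.Z mu Q B2 w2.
Proof.
  intros HN HB Hw Hw1.
  (* [B / w2 = r * (B / w1)] with the dilation factor [r = w1 / w2]. *)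
  pose proof (dilation_gap_nonincreasing Q dQ (w1 / w2) (B1 / w1) (B2 / w1) Q_cont Q_derive HN)
    as Hgap.
  replace (w1 / w2 * (B1 / w1)) with (B1 / w2) in Hgap by (field; lra).
  replace (w1 / w2 * (B2 / w1)) with (B2 / w2) in Hgap by (field; lra).
  enough (Q (B2 / w2) - Q (B2 / w1) <= Q (B1 / w2) - Q (B1 / w1)) by (unfold Defs.Z; lra).
  apply Hgap; [apply one_le_div; lra | split; [apply one_le_div; lra |]].
  apply Rmult_le_compat_r; [apply Rlt_le, Rinv_0_lt_compat |]; lra.
Qed.

Lemma argmax_set_exchange (B1 B2 w1 w2 : R) :
  nonincreasing_on (fun N => 1 <= N) (fun N => N * dQ N) ->
  B1 <= B2 -> w2 <= w1 ->
  argmax_set c0 mu Q B1 w1 -> argmax_set c0 mu Q B2 w2 ->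
  argmax_set c0 mu Q B1 w2 /\ argmax_set c0 mu Q B2 w1.
Proof.
  intros HN HB Hw [Hw1 Hmax1] [Hw2 Hmax2].
  pose proof (Z_increasing_differences B1 B2 w1 w2 HN HB (conj (proj1 Hw2) Hw) (proj2 Hw1)).
  pose proof (Hmax1 w2 ltac:(lra)). pose proof (Hmax2 w1 ltac:(lra)).
  split; (split; [lra |]); intros w Hw'.
  - pose proof (Hmax1 w Hw'). lra.
  - pose proof (Hmax2 w Hw'). lra.
Qed.

Lemma is_min_argmax_nondecreasing (B1 B2 w1 w2 : R) :
  nonincreasing_on (fun N => 1 <= N) (fun N => N * dQ N) -> B1 <= B2 ->
  is_min_argmax c0 mu Q B1 w1 -> is_min_argmax c0 mu Q B2 w2 -> w1 <= w2.
Proof.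
  intros HN HB [H1 Hmin1] [H2 _]. destruct (Rle_or_lt w1 w2) as [| Hlt]; [assumption |].
  apply Hmin1, (argmax_set_exchange B1 B2 w1 w2 HN HB (Rlt_le _ _ Hlt) H1 H2).
Qed.

Lemma is_max_argmax_nondecreasing (B1 B2 w1 w2 : R) :
  nonincreasing_on (fun N => 1 <= N) (fun N => N * dQ N) -> B1 <= B2 ->
  is_max_argmax c0 mu Q B1 w1 -> is_max_argmax c0 mu Q B2 w2 -> w1 <= w2.
Proof.
  intros HN HB [H1 _] [H2 Hmax2]. destruct (Rle_or_lt w1 w2) as [| Hlt]; [assumption |].
  apply Hmax2, (argmax_set_exchange B1 B2 w1 w2 HN HB (Rlt_le _ _ Hlt) H1 H2).
Qed.

Lemma argmax_set_nondecreasing (B1 B2 w1 w2 : R) :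
  concave_on (fun w => c0 <= w) mu ->
  nonincreasing_on (fun N => 1 <= N) (fun N => N * dQ N) ->
  strictly_decreasing_on (fun N => 1 <= N) (fun N => N ^ 2 * dQ N) -> B1 <= B2 ->
  argmax_set c0 mu Q B1 w1 -> argmax_set c0 mu Q B2 w2 -> w1 <= w2.
Proof.
  intros Hmu HN HS HB H1 H2. destruct (Rle_or_lt w1 w2) as [| Hlt]; [assumption |].
  destruct (argmax_set_exchange B1 B2 w1 w2 HN HB (Rlt_le _ _ Hlt) H1 H2) as [H12 _].
  rewrite (argmax_set_unique B1 w1 w2 Hmu HS H1 H12). lra.
Qed.

End Objective.

Theorem theorem1 (c0 : R) (mu dmu d2mu Q dQ d2Q : R -> R) :
  0 < c0 ->
  twice_diff_on (fun x => c0 <= x) mu dmu d2mu ->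
  increasing_on (fun x => c0 <= x) mu ->
  concave_on (fun x => c0 <= x) mu ->
  twice_diff_on (fun N => 1 <= N) Q dQ d2Q ->
  (forall N, 1 <= N -> 0 <= Q N) ->
  increasing_on (fun N => 1 <= N) Q ->
  concave_on (fun N => 1 <= N) Q ->
  (nonincreasing_on (fun N => 1 <= N) (fun N => N * dQ N) ->
   (forall B1 B2 w1 w2, c0 <= B1 -> B1 <= B2 ->
      is_min_argmax c0 mu Q B1 w1 -> is_min_argmax c0 mu Q B2 w2 -> w1 <= w2) /\
   (forall B1 B2 w1 w2, c0 <= B1 -> B1 <= B2 ->
      is_max_argmax c0 mu Q B1 w1 -> is_max_argmax c0 mu Q B2 w2 -> w1 <= w2))
  /\
  (nonincreasing_on (fun N => 1 <= N) (fun N => N * dQ N) ->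
   strictly_decreasing_on (fun N => 1 <= N) (fun N => N ^ 2 * dQ N) ->
   (forall B, c0 <= B -> exists w, forall w', argmax_set c0 mu Q B w' <-> w' = w) /\
   (forall B1 B2 w1 w2, c0 <= B1 -> B1 <= B2 ->
      argmax_set c0 mu Q B1 w1 -> argmax_set c0 mu Q B2 w2 -> w1 <= w2)).
Proof.
  intros Hc0 [Hmu_d _] _ Hmu_concave [HQ_d _] _ _ _.
  pose proof (is_derive_within_continuous_on _ _ _ Hmu_d) as Hmu.
  pose proof (is_derive_within_continuous_on _ _ _ HQ_d) as HQ.
  pose proof (is_derive_of_within_Ici 1 Q dQ HQ_d) as HdQ.
  split.
  - intros HN. split; intros B1 B2 w1 w2 _ HB H1 H2.
    + eapply is_min_argmax_nondecreasing; eassumption.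
    + eapply is_max_argmax_nondecreasing; eassumption.
  - intros HN HS. split.
    + intros B HB. destruct (argmax_set_exists c0 mu Q Hc0 Hmu HQ B HB) as [w Hw].
      exists w. intros w'. split; [| intros ->; exact Hw].
      intros Hw'. eapply argmax_set_unique; eassumption.
    + intros B1 B2 w1 w2 _ HB H1 H2. eapply argmax_set_nondecreasing; eassumption.
Qed.
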